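(* Let $n\ge4$, $\mu_1,\mu_2,\beta>0$, $p=2q+1$ with $\frac{n}{n-2}<p<\frac{n+2}{n-2}$, and let $(w_1,w_2)$ be a nonnegative $C^2$ solution on $\mathbb{R}$ of $$w_1''+\tau w_1'-\sigma w_1+\mu_1w_1^{2q+1}+\beta w_1^qw_2^{q+1}=0,\qquad w_2''+\tau w_2'-\sigma w_2+\mu_2w_2^{2q+1}+\beta w_2^qw_1^{q+1}=0.$$ If $\liminf_{t\to+\infty}w_1(t)=\liminf_{t\to+\infty}w_2(t)=0$, then $\liminf_{t\to+\infty}(w_1+w_2)(t)=0$.
   Context: $\tau=\frac4{p-1}-n+2$, $\sigma=\frac2{p-1}\big(n-2-\frac2{p-1}\big)$; both are positive in the stated range of $p$. *)

From Stdlib Require Import Reals Lra.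
Open Scope R_scope.

(* Real power x^a for x >= 0, with the convention 0^a = 0 (used for a > 0).
   Stdlib's Rpower 0 a = 1, so we patch the value at 0. *)
Definition rpow (x a : R) : R := if Rle_dec x 0 then 0 else Rpower x a.

Definition tau_np (n : nat) (p : R) : R := 4 / (p - 1) - INR n + 2.
Definition sigma_np (n : nat) (p : R) : R := 2 / (p - 1) * (INR n - 2 - 2 / (p - 1)).

Definition liminf_pinfty_eq (f : R -> R) (l : R) : Prop :=
  forall eps : R, eps > 0 ->
    (exists T : R, forall t : R, t >= T -> f t > l - eps) /\
    (forall T : R, exists t : R, t >= T /\ f t < l + eps).

From Stdlib Require Import Reals Lra Classical.
Open Scope R_scope.

(* Suppose, for a contradiction, that w1 + w2 >= eps on some
   half-line [T, +oo).  Since 0 < q < 1 (this is what the range of p gives),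
   the coupling term beta w1^q w2^(q+1) dominates the linear term sigma w1
   wherever w1 is below a small threshold th and w2 >= eps/2; there the first
   equation yields  w1'' + tau w1' <= 0.  Because liminf w2 = 0 we find a < c
   in [T, +oo) with w2 small, hence w1 >= th, at a and c, and because
   liminf w1 = 0 some b in between has w1 b < th.  This is excluded by a
   minimum principle: a C^2 function with f'' + tau f' <= 0 wherever f < th
   cannot dip below th inside an interval while being >= th at both ends.
   The file first collects facts on real powers and the coupling estimate,
   then the one-dimensional minimum principle (via the monotonicity of
   e^(tau v) f'(v)), and finally combines them. *)

Lemma rpow_of_pos (x a : R) : 0 < x -> rpow x a = Rpower x a.
Proof. intros Hx. unfold rpow. destruct (Rle_dec x 0); [lra | reflexivity]. Qed.

Lemma rpow_zero (a : R) : rpow 0 a = 0.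
Proof. unfold rpow. destruct (Rle_dec 0 0); [reflexivity | lra]. Qed.

Lemma rpow_nonneg (x a : R) : 0 <= rpow x a.
Proof. unfold rpow. destruct (Rle_dec x 0); [lra | left; apply exp_pos]. Qed.

Lemma Rpower_small (a k : R) : 0 < a -> 0 < k ->
  exists d, 0 < d /\ forall x, 0 < x < d -> Rpower x a < k.
Proof.
  intros Ha Hk. exists (Rpower k (/ a)). split; [apply exp_pos |].
  intros x Hx.
  apply Rlt_le_trans with (Rpower (Rpower k (/ a)) a).
  - apply Rlt_Rpower_l; lra.
  - rewrite Rpower_mult, Rinv_l, Rpower_1; lra.
Qed.

(* Coupling estimate: for 0 < q < 1 the sublinear factor x^q beats any linear
   term sg*x for small x, as soon as the other component y stays >= eps/2. *)
Lemma coupling_dominates (sg be q eps : R) : 0 < be -> 0 < q < 1 -> 0 < eps ->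
  exists th, 0 < th /\ th <= eps / 2 /\
    forall x y, 0 < x -> x < th -> eps / 2 <= y ->
      sg * x <= be * rpow x q * rpow y (q + 1).
Proof.
  intros Hbe Hq Heps.
  set (A := be * Rpower (eps / 2) (q + 1)).
  set (S := Rabs sg + 1).
  assert (HA : 0 < A) by (apply Rmult_lt_0_compat; [lra | apply exp_pos]).
  assert (HS : 0 < S) by (pose proof (Rabs_pos sg); unfold S; lra).
  destruct (Rpower_small (1 - q) (A / S)) as [d [Hd Hsmall]];
    [lra | apply Rdiv_lt_0_compat; lra |].
  exists (Rmin (eps / 2) d).
  split; [apply Rmin_glb_lt; lra |]. split; [apply Rmin_l |].
  intros x y Hx Hxth Hy.
  pose proof (Rmin_r (eps / 2) d) as Hmin.
  rewrite (rpow_of_pos x q Hx), (rpow_of_pos y (q + 1)) by lra.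
  assert (Hsplit : x = Rpower x (1 - q) * Rpower x q).
  { rewrite <- Rpower_plus. replace (1 - q + q) with 1 by ring.
    rewrite Rpower_1; lra. }
  assert (Hxq : 0 < Rpower x q) by apply exp_pos.
  assert (Hsmall_x : S * Rpower x (1 - q) < A).
  { specialize (Hsmall x ltac:(lra)).
    apply (Rmult_lt_compat_l S) in Hsmall; [| lra].
    replace (S * (A / S)) with A in Hsmall by (field; lra). exact Hsmall. }
  assert (Hy_pow : Rpower (eps / 2) (q + 1) <= Rpower y (q + 1))
    by (apply Rle_Rpower_l; lra).
  assert (Hsg : sg * x <= S * x) by (pose proof (Rle_abs sg); unfold S; nra).
  assert (HAy : A <= be * Rpower y (q + 1))
    by (unfold A; apply Rmult_le_compat_l; lra).
  rewrite Hsplit in Hsg. nra.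
Qed.

Lemma weighted_slope_derivative (f' f'' : R -> R) (tau v : R) :
  derivable_pt_lim f' v (f'' v) ->
  derivable_pt_lim (fun v => exp (tau * v) * f' v) v
    (exp (tau * v) * (f'' v + tau * f' v)).
Proof.
  intros Hf'.
  assert (Hlin : derivable_pt_lim (fun v => tau * v) v tau).
  { pose proof (derivable_pt_lim_scal (fun v => v) tau v 1 (derivable_pt_lim_id v)) as H.
    rewrite Rmult_1_r in H. exact H. }
  assert (Hexp : derivable_pt_lim (fun v => exp (tau * v)) v (exp (tau * v) * tau))
    by exact (derivable_pt_lim_comp _ exp v tau _ Hlin (derivable_pt_lim_exp _)).
  replace (exp (tau * v) * (f'' v + tau * f' v))
    with (exp (tau * v) * tau * f' v + exp (tau * v) * f'' v) by ring.
  exact (derivable_pt_lim_mult _ f' v _ _ Hexp Hf').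
Qed.

Section MinimumPrinciple.

Variables (f f' f'' : R -> R) (tau : R).
Hypothesis Hd : forall t, derivable_pt_lim f t (f' t).
Hypothesis Hdd : forall t, derivable_pt_lim f' t (f'' t).

Lemma f_continuous (t : R) : continuity_pt f t.
Proof. apply derivable_continuous_pt. exists (f' t). apply Hd. Qed.

(* If f'' + tau f' <= 0 on [x, y], then e^(tau v) f'(v) decreases there, so
   a nonpositive slope at x stays nonpositive on [x, y]. *)
Lemma slope_stays_nonpos (x y : R) :
  (forall v, x <= v <= y -> f'' v + tau * f' v <= 0) -> f' x <= 0 ->
  forall v, x <= v <= y -> f' v <= 0.
Proof.
  intros Hsuper Hx v [Hxv Hvy].
  destruct (Rle_lt_or_eq_dec x v Hxv) as [Hlt | <-]; [| exact Hx].
  destruct (MVT_cor2 (fun v => exp (tau * v) * f' v)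
              (fun v => exp (tau * v) * (f'' v + tau * f' v)) x v Hlt)
    as [c [Hmvt Hc]].
  { intros c _. apply weighted_slope_derivative, Hdd. }
  assert (Hec : 0 < exp (tau * c)) by apply exp_pos.
  assert (Hev : 0 < exp (tau * v)) by apply exp_pos.
  assert (Hex : 0 < exp (tau * x)) by apply exp_pos.
  assert (Hcs : f'' c + tau * f' c <= 0) by (apply Hsuper; lra).
  assert (Hdrop : exp (tau * v) * f' v <= exp (tau * x) * f' x).
  { assert (exp (tau * c) * (f'' c + tau * f' c) * (v - x) <= 0); [| lra].
    assert (exp (tau * c) * (f'' c + tau * f' c) <= 0) by nra. nra. }
  nra.
Qed.

Lemma nonincreasing_of_slope_nonpos (x y : R) : x <= y ->
  (forall v, x <= v <= y -> f' v <= 0) -> f y <= f x.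
Proof.
  intros Hxy Hneg.
  destruct (Rle_lt_or_eq_dec x y Hxy) as [Hlt | <-]; [| lra].
  destruct (MVT_cor2 f f' x y Hlt) as [c [Hmvt Hc]]; [intros; apply Hd |].
  assert (f' c <= 0) by (apply Hneg; lra). nra.
Qed.

Lemma continuity_eps (t e : R) : 0 < e ->
  exists d, 0 < d /\ forall u, Rabs (u - t) < d -> Rabs (f u - f t) < e.
Proof.
  intros He. destruct (f_continuous t e He) as [d [Hd0 Hclose]].
  exists d. split; [exact Hd0 |]. intros u Hu.
  destruct (Req_dec u t) as [-> | Hne].
  - rewrite Rminus_diag, Rabs_R0. exact He.
  - apply Hclose. split; [split; [exact I | auto] | exact Hu].
Qed.

Lemma bound_at_left_end (m r K : R) : m < r ->
  (forall u, m <= u < r -> f u <= K) -> f r <= K.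
Proof.
  intros Hmr Hbound. apply Rnot_lt_le. intros HK.
  destruct (continuity_eps r (f r - K)) as [d [Hd0 Hclose]]; [lra |].
  set (u := Rmax m (r - d / 2)).
  assert (Hu : m <= u < r) by (split; [apply Rmax_l | apply Rmax_lub_lt; lra]).
  assert (Hdist : Rabs (u - r) < d)
    by (pose proof (Rmax_r m (r - d / 2)); rewrite Rabs_left; unfold u in *; lra).
  specialize (Hclose u Hdist). apply Rabs_def2 in Hclose.
  specialize (Hbound u Hu). lra.
Qed.

Lemma first_crossing (m c th : R) : m <= c -> f m < th -> th <= f c ->
  exists r, m < r <= c /\ th <= f r /\ forall u, m <= u < r -> f u < th.
Proof.
  intros Hmc Hm Hc.
  set (S := fun t => m <= t <= c /\ forall u, m <= u <= t -> f u < th).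
  assert (HSm : S m).
  { split; [lra |]. intros u Hu. replace u with m by lra. exact Hm. }
  assert (Hbd : bound S) by (exists c; intros t Ht; apply Ht).
  destruct (completeness S Hbd (ex_intro _ m HSm)) as [r [Hub Hlub]].
  assert (Hmr : m <= r) by (apply Hub, HSm).
  assert (Hrc : r <= c) by (apply Hlub; intros t Ht; apply Ht).
  assert (Hbelow : forall u, m <= u < r -> f u < th).
  { intros u Hu. apply NNPP. intros Hfu.
    assert (r <= u); [| lra].
    apply Hlub. intros t [Ht Hall]. apply Rnot_lt_le. intros Hut.
    apply Hfu, Hall. lra. }
  assert (Hfr : th <= f r).
  { apply Rnot_lt_le. intros Hlt.
    assert (Hrc' : r < c) by (destruct (Rle_lt_or_eq_dec r c Hrc); [auto | subst; lra]).
    destruct (continuity_eps r (th - f r)) as [d [Hd0 Hclose]]; [lra |].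
    set (t := Rmin c (r + d / 2)).
    assert (Ht : r < t <= c)
      by (split; [apply Rmin_glb_lt; lra | apply Rmin_l]).
    assert (HSt : S t).
    { split; [lra |]. intros u Hu.
      destruct (Rlt_le_dec u r) as [Hur | Hur]; [apply Hbelow; lra |].
      pose proof (Rmin_r c (r + d / 2)).
      assert (Hdist : Rabs (u - r) < d) by (rewrite Rabs_right; unfold t in *; lra).
      specialize (Hclose u Hdist). apply Rabs_def2 in Hclose. lra. }
    specialize (Hub t HSt). lra. }
  exists r. split; [| split; [exact Hfr | exact Hbelow]].
  split; [| exact Hrc].
  destruct (Rle_lt_or_eq_dec m r Hmr) as [Hlt | <-]; [exact Hlt | lra].
Qed.

(* At an interior minimum m we have f' m = 0; up to the first point r after m
   where f reaches th, f is nonincreasing, so f r <= f m < th: absurd. *)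
Lemma no_dip_below (th a c : R) : a < c -> th <= f a -> th <= f c ->
  (forall v, a <= v <= c -> f v < th -> f'' v + tau * f' v <= 0) ->
  forall b, a <= b <= c -> th <= f b.
Proof.
  intros Hac Ha Hc Hsuper b Hb. apply Rnot_lt_le. intros Hfb.
  destruct (continuity_ab_min f a c (Rlt_le _ _ Hac) (fun t _ => f_continuous t))
    as [m [Hmin Hm]].
  assert (Hfm : f m < th) by (specialize (Hmin b Hb); lra).
  assert (Ham : a < m) by (destruct (Rle_lt_or_eq_dec a m (proj1 Hm)); [auto | subst; lra]).
  assert (Hmc : m < c) by (destruct (Rle_lt_or_eq_dec m c (proj2 Hm)); [auto | subst; lra]).
  assert (Hf'm : f' m = 0).
  { set (pr := exist (fun l => derivable_pt_abs f m l) (f' m) (Hd m) : derivable_pt f m).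
    rewrite <- (derive_pt_eq_0 f m (f' m) pr (Hd m)).
    apply (deriv_minimum f a c m pr Ham Hmc). intros; apply Hmin; lra. }
  destruct (first_crossing m c th (Rlt_le _ _ Hmc) Hfm Hc) as [r [Hr [Hfr Hbelow]]].
  assert (Hdecr : forall u, m <= u < r -> f u <= f m).
  { intros u Hu.
    assert (Hsuper_mu : forall v, m <= v <= u -> f'' v + tau * f' v <= 0)
      by (intros v Hv; apply Hsuper; [lra | apply Hbelow; lra]).
    apply nonincreasing_of_slope_nonpos; [lra |].
    apply slope_stays_nonpos; [exact Hsuper_mu | lra]. }
  pose proof (bound_at_left_end m r (f m) (proj1 Hr) Hdecr). lra.
Qed.

End MinimumPrinciple.

Lemma exponent_range (n : nat) (p q : R) : (4 <= n)%nat -> p = 2 * q + 1 ->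
  INR n / (INR n - 2) < p -> p < (INR n + 2) / (INR n - 2) -> 0 < q < 1.
Proof.
  intros Hn Hpq Hlo Hhi.
  assert (HN : 4 <= INR n) by (replace 4 with (INR 4) by (simpl; ring); apply le_INR, Hn).
  assert (Hlo' : 1 < INR n / (INR n - 2))
    by (apply (Rmult_lt_reg_r (INR n - 2)); [lra | field_simplify; lra]).
  assert (Hhi' : (INR n + 2) / (INR n - 2) <= 3)
    by (apply (Rmult_le_reg_r (INR n - 2)); [lra | field_simplify; lra]).
  lra.
Qed.

Lemma supersolution_where_small (tau sg mu be q th eps w w' w'' z : R) :
  0 < mu -> 0 <= w ->
  w'' + tau * w' - sg * w + mu * rpow w (2 * q + 1) + be * rpow w q * rpow z (q + 1) = 0 ->
  (forall x y, 0 < x -> x < th -> eps / 2 <= y -> sg * x <= be * rpow x q * rpow y (q + 1)) ->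
  w < th -> eps / 2 <= z -> w'' + tau * w' <= 0.
Proof.
  intros Hmu Hw Heq Hdom Hwth Hz.
  pose proof (rpow_nonneg w (2 * q + 1)).
  destruct (Rle_lt_or_eq_dec 0 w Hw) as [Hpos | <-].
  - specialize (Hdom w z Hpos Hwth Hz). nra.
  - rewrite !rpow_zero in Heq. lra.
Qed.

Theorem lemma4p3
  (n : nat) (mu1 mu2 beta p q : R)
  (w1 w1' w1'' w2 w2' w2'' : R -> R)
  (Hn : (4 <= n)%nat)
  (Hmu1 : 0 < mu1) (Hmu2 : 0 < mu2) (Hbeta : 0 < beta)
  (Hpq : p = 2 * q + 1)
  (Hplo : INR n / (INR n - 2) < p) (Hphi : p < (INR n + 2) / (INR n - 2))
  (Hd1 : forall t, derivable_pt_lim w1 t (w1' t))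
  (Hdd1 : forall t, derivable_pt_lim w1' t (w1'' t))
  (Hc1 : forall t, continuity_pt w1'' t)
  (Hd2 : forall t, derivable_pt_lim w2 t (w2' t))
  (Hdd2 : forall t, derivable_pt_lim w2' t (w2'' t))
  (Hc2 : forall t, continuity_pt w2'' t)
  (Hnn1 : forall t, 0 <= w1 t) (Hnn2 : forall t, 0 <= w2 t)
  (Heq1 : forall t, w1'' t + tau_np n p * w1' t - sigma_np n p * w1 t
           + mu1 * rpow (w1 t) (2 * q + 1)
           + beta * rpow (w1 t) q * rpow (w2 t) (q + 1) = 0)
  (Heq2 : forall t, w2'' t + tau_np n p * w2' t - sigma_np n p * w2 t
           + mu2 * rpow (w2 t) (2 * q + 1)
           + beta * rpow (w2 t) q * rpow (w1 t) (q + 1) = 0)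
  (Hl1 : liminf_pinfty_eq w1 0) (Hl2 : liminf_pinfty_eq w2 0) :
  liminf_pinfty_eq (fun t => w1 t + w2 t) 0.
Proof.
  pose proof (exponent_range n p q Hn Hpq Hplo Hphi) as Hq.
  intros eps Heps. split.
  { exists 0. intros t _. pose proof (Hnn1 t). pose proof (Hnn2 t). lra. }
  intros T. apply NNPP. intros Hnever.
  assert (Hsum : forall t, t >= T -> eps <= w1 t + w2 t).
  { intros t Ht. apply Rnot_lt_le. intros Hlt. apply Hnever. exists t. lra. }
  destruct (coupling_dominates (sigma_np n p) beta q eps Hbeta Hq Heps)
    as [th [Hth [Hth_eps Hdom]]].
  destruct (proj2 (Hl2 th Hth) T) as [a [HaT Ha]].
  destruct (proj2 (Hl1 th Hth) (a + 1)) as [b [Hba Hb]].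
  destruct (proj2 (Hl2 th Hth) (b + 1)) as [c [Hcb Hc]].
  assert (Hwa : th <= w1 a) by (specialize (Hsum a HaT); lra).
  assert (Hwc : th <= w1 c) by (specialize (Hsum c ltac:(lra)); lra).
  assert (Hsuper : forall v, a <= v <= c -> w1 v < th ->
                     w1'' v + tau_np n p * w1' v <= 0).
  { intros v Hv Hsmall.
    apply (supersolution_where_small _ _ mu1 beta q th eps _ _ _ (w2 v) Hmu1 (Hnn1 v)
             (Heq1 v) Hdom Hsmall).
    specialize (Hsum v ltac:(lra)). lra. }
  pose proof (no_dip_below w1 w1' w1'' (tau_np n p) Hd1 Hdd1 th a c
                ltac:(lra) Hwa Hwc Hsuper b ltac:(lra)).
  lra.
Qed.
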